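(* Let $V$ be a finite set partitioned into $A$ and $B$, and for each $u\in V$ let $d_u\ge 1$ and $0\le\lambda_u\le d_u$ be integers. Let $(X_u)_{u\in V}$ be independent random variables with $X_u=d_u$ with probability $\lambda_u/(2d_u)$ and $X_u=0$ otherwise if $u\in B$, and $X_u=-d_u$ with probability $\lambda_u/(2d_u)$ and $X_u=0$ otherwise if $u\in A$. Let $(Y_u)_{u\in V}$ be independent random variables with $Y_u=\lambda_u$ with probability $1/2$ and $Y_u=0$ otherwise if $u\in B$, and $Y_u=-d_u$ with probability $\lambda_u/(2d_u)$ and $Y_u=0$ otherwise if $u\in A$. Let $f$ be a concave and continuous function (defined on an interval containing all possible values of the sums below). Then $\mathbf{E}\big[f\big(\sum_{u\in V}X_u\big)\big]\le\mathbf{E}\big[f\big(\sum_{u\in V}Y_u\big)\big]$. *)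

From HB Require Import structures.
From mathcomp Require Import all_boot all_order all_algebra.
From mathcomp Require Import all_classical all_reals topology normedtype.
Set Implicit Arguments. Unset Strict Implicit. Unset Printing Implicit Defensive.
Import Order.TTheory GRing.Theory Num.Theory.
Local Open Scope ring_scope.

(* Expectation of f (sum_u Z_u) where (Z_u)_{u in V} are INDEPENDENT random
   variables, Z_u taking value [val u] with probability [p u] and 0 otherwise.
   The joint law is the product law on outcomes w : {ffun V -> bool}
   (w u = true iff Z_u = val u). *)
Definition outcome_sum (R : ringType) (V : finType) (val : V -> R)
  (w : {ffun V -> bool}) : R :=
  \sum_(u : V) (if w u then val u else 0).

Definition outcome_prob (R : ringType) (V : finType) (p : V -> R)
  (w : {ffun V -> bool}) : R :=
  \prod_(u : V) (if w u then p u else 1 - p u).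

Definition E_indep (R : ringType) (V : finType) (val p : V -> R)
  (f : R -> R) : R :=
  \sum_(w : {ffun V -> bool}) outcome_prob p w * f (outcome_sum val w).

Definition concave_on (R : realDomainType) (i : interval R) (f : R -> R) :=
  forall x y t : R, x \in i -> y \in i -> 0 <= t -> t <= 1 ->
    t * f x + (1 - t) * f y <= f (t * x + (1 - t) * y).

(* The data of the lemma; B = complement of A. *)
Definition valX (R : ringType) (V : finType) (A : {set V}) (d : V -> nat)
  (u : V) : R := if u \in A then - (d u)%:R else (d u)%:R.
Definition probX (R : fieldType) (V : finType) (d lam : V -> nat)
  (u : V) : R := (lam u)%:R / (2 * (d u)%:R).
Definition valY (R : ringType) (V : finType) (A : {set V}) (d lam : V -> nat)
  (u : V) : R := if u \in A then - (d u)%:R else (lam u)%:R.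
Definition probY (R : fieldType) (V : finType) (A : {set V}) (d lam : V -> nat)
  (u : V) : R := if u \in A then (lam u)%:R / (2 * (d u)%:R) else 1 / 2.

From HB Require Import structures.
From mathcomp Require Import all_boot all_order all_algebra.
From mathcomp Require Import all_classical all_reals topology normedtype.
From mathcomp Require Import ring lra.
Import Order.TTheory GRing.Theory Num.Theory numFieldNormedType.Exports.
Local Open Scope ring_scope.

(** Swap the variables one at a time, turning X_u into Y_u for u in B (for u in
   A they have the same law).  Conditioning on all other coordinates, with s the
   partial sum, the swap at u replaces
   (t/2) f(s + d_u) + (1 - t/2) f(s)  by  (1/2) f(s + t d_u) + (1/2) f(s),
   where t = lambda_u / d_u; concavity of f between s and s + d_u shows that
   this can only increase the expectation. *)

Definition toggle {V : finType} (u0 : V) (w : {ffun V -> bool}) :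
    {ffun V -> bool} :=
  [ffun u => if u == u0 then ~~ w u else w u].

Lemma toggleK {V : finType} (u0 : V) : involutive (toggle u0).
Proof.
by move=> w; apply/ffunP => u; rewrite !ffunE; case: eqP => //; rewrite negbK.
Qed.

Lemma toggle_neq {V : finType} (u0 u : V) (w : {ffun V -> bool}) :
  u != u0 -> toggle u0 w u = w u.
Proof. by rewrite ffunE => /negbTE ->. Qed.

Lemma E_indep_pair {R : nzRingType} {V : finType} (u0 : V) (val p : V -> R)
    (g : R -> R) :
  E_indep val p g = \sum_(w : {ffun V -> bool} | ~~ w u0)
    (outcome_prob p w * g (outcome_sum val w) +
     outcome_prob p (toggle u0 w) * g (outcome_sum val (toggle u0 w))).
Proof.
rewrite /E_indep (bigID (fun w : {ffun V -> bool} => w u0)) /= addrC big_split.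
congr (_ + _); rewrite (reindex_inj (inv_inj (toggleK u0))) /=.
by apply: eq_bigl => w; rewrite ffunE eqxx.
Qed.

Section ToggleOutcome.
Context {R : comNzRingType} {V : finType} {u0 : V} {w : {ffun V -> bool}}.
Hypothesis w_u0 : w u0 = false.

Lemma outcome_sum_off (val : V -> R) :
  outcome_sum val w = \sum_(u | u != u0) (if w u then val u else 0).
Proof. by rewrite /outcome_sum (bigD1 u0) //= w_u0 add0r. Qed.

Lemma outcome_sum_toggle (val : V -> R) :
  outcome_sum val (toggle u0 w) = outcome_sum val w + val u0.
Proof.
rewrite outcome_sum_off /outcome_sum (bigD1 u0) //= ffunE eqxx w_u0 addrC.
by congr (_ + _); apply: eq_bigr => u /toggle_neq ->.
Qed.

Lemma outcome_prob_off (p : V -> R) :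
  outcome_prob p w =
  (1 - p u0) * \prod_(u | u != u0) (if w u then p u else 1 - p u).
Proof. by rewrite /outcome_prob (bigD1 u0) //= w_u0. Qed.

Lemma outcome_prob_toggle (p : V -> R) :
  outcome_prob p (toggle u0 w) =
  p u0 * \prod_(u | u != u0) (if w u then p u else 1 - p u).
Proof.
rewrite /outcome_prob (bigD1 u0) //= ffunE eqxx w_u0.
by congr (_ * _); apply: eq_bigr => u /toggle_neq ->.
Qed.

End ToggleOutcome.

Lemma E_indep_le_coord (R : realDomainType) (V : finType) (u0 : V)
    (val val' p p' : V -> R) (g : R -> R) :
  (forall u, u != u0 -> val u = val' u) ->
  (forall u, u != u0 -> p u = p' u) ->
  (forall u, u != u0 -> 0 <= p u <= 1) ->
  (forall w : {ffun V -> bool}, w u0 = false ->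
     p u0 * g (outcome_sum val w + val u0) + (1 - p u0) * g (outcome_sum val w)
     <= p' u0 * g (outcome_sum val w + val' u0) +
        (1 - p' u0) * g (outcome_sum val w)) ->
  E_indep val p g <= E_indep val' p' g.
Proof.
move=> eq_val eq_p p01 le_u0; rewrite !(E_indep_pair u0).
apply: ler_sum => w /negbTE w_u0.
rewrite !(outcome_sum_toggle w_u0) !(outcome_prob_off w_u0).
rewrite !(outcome_prob_toggle w_u0).
have -> : outcome_sum val' w = outcome_sum val w.
  by rewrite !(outcome_sum_off w_u0); apply: eq_bigr => u /eq_val ->.
set Q := \prod_(u | _) _.
have -> : \prod_(u | u != u0) (if w u then p' u else 1 - p' u) = Q.
  by apply: eq_bigr => u /eq_p ->.
have Q_ge0 : 0 <= Q.
  apply: prodr_ge0 => u /p01 /andP[p_ge0 p_le1].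
  by case: (w u); rewrite ?subr_ge0.
have := ler_wpM2l Q_ge0 (le_u0 w w_u0).
set a := g _; set b := g _; set c := g _ => ?; lra.
Qed.

Lemma concave_half_jump (R : realFieldType) (i : interval R) (f : R -> R)
    (s v t : R) :
  concave_on i f -> s \in i -> s + v \in i -> 0 <= t -> t <= 1 ->
  t / 2 * f (s + v) + (1 - t / 2) * f s <=
  1 / 2 * f (s + t * v) + (1 - 1 / 2) * f s.
Proof.
move=> fconc si svi t_ge0 t_le1.
have := fconc _ _ _ svi si t_ge0 t_le1.
have -> : t * (s + v) + (1 - t) * s = s + t * v by ring.
set a := f _; set b := f _; set c := f _ => ?; lra.
Qed.

Section Hybrid.
Variables (R : realFieldType) (V : finType) (A : {set V}) (d lam : V -> nat).
Hypotheses (d_ge1 : forall u, (1 <= d u)%N)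
           (lam_le_d : forall u, (lam u <= d u)%N).

Definition hybrid_val (S : {set V}) (u : V) : R :=
  if u \in S then valY R A d lam u else valX R A d u.

Definition hybrid_prob (S : {set V}) (u : V) : R :=
  if u \in S then probY R A d lam u else probX R d lam u.

Lemma E_hybrid_set0 (f : R -> R) :
  E_indep (hybrid_val finset.set0) (hybrid_prob finset.set0) f =
  E_indep (valX R A d) (probX R d lam) f.
Proof.
by congr (E_indep _ _ f); apply: boolp.funext => u;
  rewrite /hybrid_val /hybrid_prob inE.
Qed.

Lemma E_hybrid_setT (f : R -> R) :
  E_indep (hybrid_val [set: V]) (hybrid_prob [set: V]) f =
  E_indep (valY R A d lam) (probY R A d lam) f.
Proof.
by congr (E_indep _ _ f); apply: boolp.funext => u;
  rewrite /hybrid_val /hybrid_prob inE.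
Qed.

Let d_gt0 u : 0 < (d u)%:R :> R.
Proof. by rewrite ltr0n d_ge1. Qed.

Lemma ratio_ge0 u : 0 <= (lam u)%:R / (d u)%:R :> R.
Proof. by rewrite divr_ge0. Qed.

Lemma ratio_le1 u : (lam u)%:R / (d u)%:R <= 1 :> R.
Proof. by rewrite ler_pdivrMr // mul1r ler_nat. Qed.

Lemma probXE u : probX R d lam u = (lam u)%:R / (d u)%:R / 2.
Proof. by rewrite /probX invfM mulrAC mulrA. Qed.

Lemma hybrid_prob01 S u : 0 <= hybrid_prob S u <= 1.
Proof.
have := ratio_ge0 u; have := ratio_le1 u.
rewrite /hybrid_prob /probY probXE; case: (u \in S); case: (u \in A) => ? ?;
  apply/andP; split; lra.
Qed.

(* Every hybrid sum lies between two sums of the X variables (all of B on or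
   all of B off), hence in any interval containing the latter. *)
Lemma hybrid_sum_in {i : interval R} :
  (forall w : {ffun V -> bool}, outcome_sum (valX R A d) w \in i) ->
  forall S w, outcome_sum (hybrid_val S) w \in i.
Proof.
move=> Xi S w.
apply: (interval_is_interval (Xi [ffun u => (u \in A) && w u])
                             (Xi [ffun u => (u \notin A) || w u])).
rewrite /outcome_sum; apply/andP; split; apply: ler_sum => u _;
  rewrite ffunE /hybrid_val /valY /valX;
  case: (u \in A) => /=; case: (u \in S) => //; case: (w u) => //.
by rewrite ler_nat.
Qed.

Lemma E_hybrid_setU1 {i : interval R} {f : R -> R} S x :
  (forall w : {ffun V -> bool}, outcome_sum (valX R A d) w \in i) ->
  concave_on i f ->
  E_indep (hybrid_val S) (hybrid_prob S) f <=
  E_indep (hybrid_val (x |: S)) (hybrid_prob (x |: S)) f.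
Proof.
move=> Xi fconc; apply: (@E_indep_le_coord _ _ x).
- by move=> u /negbTE ux; rewrite /hybrid_val in_setU1 ux.
- by move=> u /negbTE ux; rewrite /hybrid_prob in_setU1 ux.
- by move=> u _; apply: hybrid_prob01.
move=> w w_x; set s := outcome_sum _ w.
rewrite /hybrid_val /hybrid_prob in_setU1 eqxx /=.
have [xS|xS] := boolP (x \in S); first by rewrite lexx.
rewrite /valY /valX /probY; case: ifP => xA; first by rewrite lexx.
have si : s \in i by apply: hybrid_sum_in.
have sdi : s + (d x)%:R \in i.
  have := hybrid_sum_in Xi S (toggle x w).
  by rewrite outcome_sum_toggle // /hybrid_val (negbTE xS) /valX xA.
rewrite probXE; set t := (lam x)%:R / (d x)%:R.
have -> : (lam x)%:R = t * (d x)%:R by rewrite divfK // gt_eqF.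
exact: concave_half_jump fconc si sdi (ratio_ge0 x) (ratio_le1 x).
Qed.

Lemma E_le_E_hybrid (i : interval R) (f : R -> R) S :
  (forall w : {ffun V -> bool}, outcome_sum (valX R A d) w \in i) ->
  concave_on i f ->
  E_indep (valX R A d) (probX R d lam) f <=
  E_indep (hybrid_val S) (hybrid_prob S) f.
Proof.
move=> Xi fconc; rewrite -[S]set_enum; elim: (enum S) => [|x s IHs].
  by rewrite finset.set_nil E_hybrid_set0.
have -> : [set u in x :: s] = x |: [set u in s].
  by apply/setP => u; rewrite !inE.
exact: le_trans IHs (E_hybrid_setU1 _ _ Xi fconc).
Qed.

End Hybrid.

Local Open Scope classical_set_scope.

Theorem lemma10 (R : realType) (V : finType) (A : {set V}) (d lam : V -> nat)
  (hd : forall u, (1 <= d u)%N) (hlam : forall u, (lam u <= d u)%N)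
  (i : interval R) (f : R -> R)
  (hXi : forall w : {ffun V -> bool}, outcome_sum (valX R A d) w \in i)
  (hYi : forall w : {ffun V -> bool}, outcome_sum (valY R A d lam) w \in i)
  (hconc : concave_on i f)
  (hcont : {within [set x | x \in i], continuous f}) :
  E_indep (valX R A d) (probX R d lam) f <=
  E_indep (valY R A d lam) (probY R A d lam) f.
Proof. by rewrite -E_hybrid_setT; apply: E_le_E_hybrid. Qed.
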